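(* Let $n,k,b,t$ be positive integers with $k\le n$, let $V=\{1,\dots,n\}$, and let $Q_1,\dots,Q_t$ be arbitrary subsets of $V\times\{1,\dots,b\}$; for $1\le i\le t$ and $1\le\beta\le b$ put $Q_{i,\beta}=\{x\in V:(x,\beta)\in Q_i\}$. Let $\mathcal F_k^n$ be the family of all $k$-element subsets of $V$. Suppose that $k/2$ is a prime power and that $t\le \frac{k}{2b}\lg\frac{n}{k}-\frac{k+1}{b}$, where $\lg$ is the binary logarithm. Then there exist two sets $A,B\in\mathcal F_k^n$ such that (a) $|A\cap B|=k/2$, and (b) for every $1\le\beta\le b$ and $1\le i\le t$, $|A\cap Q_{i,\beta}|$ is odd if and only if $|B\cap Q_{i,\beta}|$ is odd.
   Context: Each $Q_i$ (a ''query'') is interpreted as the set of pairs (station $x$, channel $\beta$) such that station $x$ transmits on channel $\beta$ at time step $i$; a deterministic oblivious algorithm is represented by such a sequence $Q_1,\dots,Q_t$. *)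

From mathcomp Require Import all_boot.
From Stdlib Require Import Reals.
Set Implicit Arguments. Unset Strict Implicit. Unset Printing Implicit Defensive.

Definition lg (x : R) : R := (ln x / ln 2)%R.

Definition prime_power (m : nat) : Prop :=
  exists p e : nat, prime p /\ (0 < e)%N /\ m = (p ^ e)%N.

Definition Qslice (n b : nat) (Qi : {set 'I_n * 'I_b}) (beta : 'I_b) : {set 'I_n} :=
  [set x | (x, beta) \in Qi].

(* Fix a point x and the C(n-1, k-1) sets of size k = 2q through x.  Their
   parity patterns on the t*b sets Q_{i,beta} take at most 2^(t b) values, and
   the bound on t makes 2^(t b) * sum_{i<q} C(n, i) < C(n-1, k-1).  By the
   modular Frankl-Wilson theorem for the prime power q, a family of sets of
   size divisible by q in which no two distinct members meet in a multiple of
   q has at most sum_{i<q} C(n, i) members, so some parity class contains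
   A <> B with q | |A :&: B|; since 0 < |A :&: B| < 2q, |A :&: B| = q.
   Frankl-Wilson itself: over F_p, the signed inclusion matrix of the family
   against the sets of size < q has a right inverse, because
   sum_{j<q} (-1)^j C(m, j) = [q | m] in F_p. *)

From Stdlib Require Import Reals Lra.
From mathcomp Require Import all_boot all_algebra.
From mathcomp Require Import zify.
(* The algebra library rebinds the key %R to ring_scope; the statement's %R is
   the scope of the reals. *)
Delimit Scope R_scope with R.
Set Implicit Arguments. Unset Strict Implicit. Unset Printing Implicit Defensive.

Import GRing.Theory.

Section FranklWilson.

Local Open Scope ring_scope.

Lemma sum_subsets_by_card (V : nmodType) (T : finType) (C : {set T}) (q : nat)
    (f : nat -> V) :
  \sum_(S : {set T} | (S \subset C) && (#|S| < q)%N) f #|S|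
    = \sum_(j < q) f j *+ 'C(#|C|, j).
Proof.
transitivity (\sum_(S : {set T} | S \subset C) \sum_(j < q | #|S| == j) f j).
  rewrite big_mkcondr; apply: eq_bigr => S _.
  case: ltnP => [Sq | qS]; first by rewrite (big_pred1 (Ordinal Sq)).
  by rewrite big_pred0 // => j; apply: contraTF qS => /eqP ->; rewrite -ltnNge.
rewrite (exchange_big_dep xpredT) //=; apply: eq_bigr => j _.
rewrite -cards_draws -sumr_const; apply: eq_bigl => S.
by rewrite inE.
Qed.

Lemma card_small_subsets (T : finType) (q : nat) :
  (#|[set S : {set T} | #|S| < q]| = \sum_(i < q) 'C(#|T|, i))%N.
Proof.
have := @sum_subsets_by_card nat _ [set: T] q (fun=> 1%N).
under [X in _ = X -> _]eq_bigr => j _ do rewrite natn.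
rewrite cardsT -sum1_card => <-.
by apply: eq_bigl => S; rewrite subsetT inE.
Qed.

Variables (p e : nat).
Hypothesis p_prime : prime p.
Local Notation q := (p ^ e)%N.

Lemma prime_dvd_bin_expn j : (0 < j < q)%N -> (p %| 'C(q, j))%N.
Proof.
case/andP=> j_gt0 j_lt_q; apply: contraTT j_lt_q => p_ndvd.
have coprime_q : coprime q 'C(q, j) by rewrite coprimeXl // prime_coprime.
rewrite -leqNgt; apply: (dvdn_leq j_gt0).
by rewrite -(Gauss_dvdl _ coprime_q) -(prednK j_gt0) -mul_bin_diag dvdn_mulr.
Qed.

Lemma bin_addn_expn m j : (j < q)%N -> ('C(m + q, j))%:R = ('C(m, j))%:R :> 'F_p.
Proof.
elim: m j => [|m IH] [|j] j_lt_q; rewrite ?bin0 //.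
  apply/eqP; rewrite add0n bin0n -(dvdn_pcharf (pchar_Fp p_prime)).
  exact: prime_dvd_bin_expn.
by rewrite addSn !binS !natrD !IH // ltnW.
Qed.

Lemma bin_modn_expn m j : (j < q)%N -> ('C(m, j))%:R = ('C(m %% q, j))%:R :> 'F_p.
Proof.
move=> j_lt_q; rewrite {1}(divn_eq m q).
elim: (m %/ q)%N => [|a IH]; first by rewrite mul0n add0n.
by rewrite mulSn -addnA addnC bin_addn_expn.
Qed.

Lemma alt_sum_bin_expn m :
  \sum_(j < q) (-1) ^+ j *+ 'C(m, j) = (q %| m)%:R :> 'F_p.
Proof.
(* Reduce m to r = m %% q < q; the sum is then the full expansion of (1 - 1)^r. *)
under eq_bigr => j _ do rewrite -mulr_natr (bin_modn_expn m (ltn_ord j)) mulr_natr.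
rewrite /dvdn; have : (m %% q < q)%N by rewrite ltn_mod expn_gt0 prime_gt0.
move: (m %% q)%N => r r_lt_q.
rewrite -(big_mkord xpredT (fun j => (-1) ^+ j *+ 'C(r, j) : 'F_p)).
rewrite (big_cat_nat _ (n := r.+1)) //= [X in _ + X]big1_seq ?addr0; last first.
  by move=> i /andP[_]; rewrite mem_index_iota => /andP[ri _]; rewrite bin_small.
have := exprDn (1 : 'F_p) (-1) r; rewrite subrr expr0n big_mkord => ->.
by apply: eq_bigr => i _; rewrite expr1n mul1r.
Qed.

Theorem frankl_wilson (T : finType) (G : {set {set T}}) :
  (forall A, A \in G -> q %| #|A|)%N ->
  (forall A B, A \in G -> B \in G -> A != B -> ~~ (q %| #|A :&: B|))%N ->
  (#|G| <= \sum_(i < q) 'C(#|T|, i))%N.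
Proof.
move=> q_dvd_A q_ndvd_AB; rewrite -card_small_subsets.
set P := [set S : {set T} | (#|S| < q)%N].
pose S (j : 'I_#|P|) : {set T} := enum_val j.
pose A (i : 'I_#|G|) : {set T} := enum_val i.
pose U : 'M['F_p]_(#|G|, #|P|) :=
  \matrix_(i, j) (if S j \subset A i then (-1) ^+ #|S j| else 0).
pose W : 'M['F_p]_(#|P|, #|G|) := \matrix_(j, i) (S j \subset A i)%:R.
(* (U *m W) i i' = sum of (-1)^|S| over the small S inside A i :&: A i'. *)
have UW : U *m W = 1%:M.
  apply/matrixP => i i'; rewrite !mxE.
  transitivity (\sum_(X in P | X \subset A i :&: A i') (-1) ^+ #|X| : 'F_p).
    rewrite big_mkcondr [RHS]big_enum_val; apply: eq_bigr => j _.
    by rewrite !mxE subsetI; do 2 case: (_ \subset _); rewrite ?mulr1 ?mulr0.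
  under eq_bigl => X do rewrite inE andbC.
  rewrite sum_subsets_by_card alt_sum_bin_expn.
  have [<-|neq_ii'] := eqVneq i i'.
    by rewrite setIid (q_dvd_A _ (enum_valP i)).
  rewrite (negbTE (q_ndvd_AB _ _ (enum_valP i) (enum_valP i') _)) //.
  by apply: contra neq_ii' => /eqP/enum_val_inj ->.
have := mxrankM_maxl U W; rewrite UW mxrank1 => rk.
exact: leq_trans rk (rank_leq_col U).
Qed.

End FranklWilson.

Lemma Nat_powE m n : Nat.pow m n = m ^ n.
Proof. by elim: n => // n IH; rewrite expnS -IH. Qed.

Lemma prime_powerP q :
  prime_power q -> exists p e, [/\ prime p, 0 < e & q = p ^ e].
Proof. by case=> p [e [p_prime [e_gt0 ->]]]; exists p, e; rewrite Nat_powE. Qed.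

Lemma frankl_wilson_pigeonhole (T C : finType) (q : nat) (F : {set {set T}})
    (c : {set T} -> C) :
  prime_power q ->
  (forall A, A \in F -> q %| #|A|) ->
  #|C| * \sum_(i < q) 'C(#|T|, i) < #|F| ->
  exists A B, [/\ A \in F, B \in F, A != B, c A = c B & q %| #|A :&: B|].
Proof.
case/prime_powerP=> p [e [p_prime _ ->]] q_dvd_A F_big.
have [/existsP[A /existsP[B /and5P[AF BF neqAB /eqP cAB dvdAB]]] | no_pair] :=
  boolP [exists A, exists B,
    [&& A \in F, B \in F, A != B, c A == c B & p ^ e %| #|A :&: B|]].
  by exists A, B.
have fiber_le v : #|[set A in F | c A == v]| <= \sum_(i < p ^ e) 'C(#|T|, i).
  apply: frankl_wilson => // [A | A B]; first by rewrite inE => /andP[/q_dvd_A].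
  rewrite !inE => /andP[AF /eqP cA] /andP[BF /eqP cB] neqAB.
  apply: contra no_pair => dvdAB; apply/existsP; exists A; apply/existsP; exists B.
  by rewrite AF BF neqAB cA cB eqxx dvdAB.
move: F_big; rewrite ltnNge => /negP; case.
rewrite -sum1_card (partition_big c xpredT) //= -sum_nat_const.
apply: leq_sum => v _; apply: leq_trans (fiber_le v); rewrite sum1_card.
by apply: subset_leq_card; apply/subsetP => A; rewrite !inE.
Qed.

Lemma leq_expn2r m n e : m <= n -> m ^ e <= n ^ e.
Proof. by move=> le_mn; elim: e => // e IH; rewrite !expnS leq_mul. Qed.

Lemma fact_mul_bin_le N m : m`! * 'C(N, m) <= N ^ m.
Proof.
rewrite mulnC bin_ffact ffact_prod -[X in _ ^ X](card_ord m) -prod_nat_const.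
by apply: leq_prod => i _; apply: leq_subr.
Qed.

Lemma expn_subn_le_fact_mul_bin N m : (N - m) ^ m <= m`! * 'C(N, m).
Proof.
rewrite mulnC bin_ffact ffact_prod -[X in _ ^ X](card_ord m) -prod_nat_const.
by apply: leq_prod => i _; rewrite leq_sub2l // ltnW.
Qed.

Lemma fact_addn_le a m : (a + m)`! <= a`! * (a + m) ^ m.
Proof.
elim: m => [|m IH]; first by rewrite addn0 muln1.
rewrite addnS factS expnS mulnCA leq_mul // (leq_trans IH) // leq_mul2l.
by rewrite leq_expn2r ?orbT.
Qed.

Lemma fact_mul_sum_bin_le N r :
  2 * r <= N -> r`! * \sum_(i < r.+1) 'C(N, i) <= 2 * N ^ r.
Proof.
elim: r => [|r IH] le_rN; first by rewrite big_ord_recr big_ord0 /= bin0.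
have IHr : r`! * \sum_(i < r.+1) 'C(N, i) <= 2 * N ^ r by apply: IH; lia.
have top := fact_mul_bin_le N r.+1.
have step : r.+1 * (2 * N ^ r) <= N * N ^ r.
  by rewrite mulnA leq_mul //; lia.
rewrite factS expnS in top; rewrite big_ord_recr /= factS expnS -mulnA mulnDr.
move: IHr top step; move: (r`!) (\sum_(i < r.+1) 'C(N, i)) ('C(N, r.+1)) (N ^ r).
move=> f s c x; nia.
Qed.

Lemma expn_lt_four_expn_subn N q : 0 < q -> 8 * q <= N ->
  N ^ (2 * q - 1) < 4 ^ q * (N - 2 * q) ^ (2 * q - 1).
Proof.
move=> q_gt0 le_8q_N; set m := 2 * q - 1.
have N_pos : 0 < N ^ m by rewrite expn_gt0; apply/orP; left; lia.
have three_quarters : 3 ^ m * N ^ m <= 4 ^ m * (N - 2 * q) ^ m.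
  by rewrite -!expnMn leq_expn2r //; lia.
have split4 : 4 ^ m = 4 ^ (q - 1) * 4 ^ q by rewrite -expnD; congr (_ ^ _); lia.
have small4 : 4 ^ (q - 1) < 3 ^ m.
  have -> : m = (q - 1) + (q - 1) + 1 by lia.
  rewrite !expnD expn1 -expnMn (@leq_ltn_trans (9 ^ (q - 1))) ?leq_expn2r //.
  by rewrite ltn_Pmulr // expn_gt0.
rewrite -(ltn_pmul2l (expn_gt0 4 (q - 1))) mulnA -split4.
by apply: leq_trans three_quarters; rewrite ltn_pmul2r.
Qed.

Lemma sum_bin_lt_bin N q D : 0 < q ->
  2 ^ (D + 2 * q + 1) * (2 * q) ^ q <= N ^ q ->
  2 ^ D * \sum_(i < q) 'C(N, i) < 'C(N.-1, 2 * q - 1).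
Proof.
case: q => [//|r] _; set q := r.+1; set m := 2 * q - 1 => le_N.
set S := \sum_(i < q) 'C(N, i); set C := 'C(N.-1, m).
have le_8q_N : 8 * q <= N.
  rewrite -(leq_exp2r _ _ (ltn0Sn r)) (leq_trans _ le_N) //.
  rewrite (_ : 8 * q = 4 * (2 * q)); last by lia.
  by rewrite expnMn leq_mul // -[4]/(2 ^ 2) -expnM leq_exp2l //; lia.
have le_S : r`! * S <= 2 * N ^ r by apply: fact_mul_sum_bin_le; lia.
have le_fact_m : m`! <= r`! * (2 * q) ^ q.
  rewrite (_ : m = r + q); last by rewrite /m /q; lia.
  by rewrite (leq_trans (fact_addn_le r q)) // leq_mul2l leq_expn2r ?orbT //; lia.
have le_C : (N - 2 * q) ^ m <= m`! * C.
  by rewrite (leq_trans _ (expn_subn_le_fact_mul_bin _ _)) // leq_expn2r //; lia.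
have lt_N := expn_lt_four_expn_subn (ltn0Sn r) le_8q_N.
have eN : N ^ q * N ^ r = N ^ m by rewrite -expnD; congr (_ ^ _); lia.
have e2 : 2 ^ (2 * q + 1) = 2 * 4 ^ q by rewrite expnD expn1 mulnC expnM.
(* After scaling by K, both sides are compared through N^(2q-1). *)
pose K := r`! * (2 * q) ^ q * (2 * 4 ^ q).
have K_gt0 : 0 < K by rewrite !muln_gt0 fact_gt0 !expn_gt0.
rewrite -(ltn_pmul2r K_gt0).
have lhs : 2 ^ D * S * K = 2 ^ (D + 2 * q + 1) * (2 * q) ^ q * (r`! * S).
  by rewrite -addnA expnD e2 /K; lia.
rewrite lhs (leq_ltn_trans (leq_mul le_N le_S)) // mulnCA eN.
have le_y : (N - 2 * q) ^ m <= C * (r`! * (2 * q) ^ q).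
  by rewrite (leq_trans le_C) // mulnC leq_mul2l le_fact_m orbT.
rewrite (leq_trans (_ : _ < 2 * (4 ^ q * (N - 2 * q) ^ m))) ?ltn_pmul2l //.
apply: (@leq_trans (2 * (4 ^ q * (C * (r`! * (2 * q) ^ q))))).
  by rewrite !leq_mul2l le_y !orbT.
by rewrite /K; lia.
Qed.

Lemma card_setI_eq_half (T : finType) (q : nat) (A B : {set T}) :
  #|A| = 2 * q -> #|B| = 2 * q -> A != B -> A :&: B != set0 ->
  q %| #|A :&: B| -> #|A :&: B| = q.
Proof.
move=> cardA cardB neqAB AB_n0 /dvdnP[c cardAB].
have AB_gt0 : 0 < #|A :&: B| by rewrite card_gt0.
have AB_le : #|A :&: B| <= 2 * q by rewrite -cardA subset_leq_card ?subsetIl.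
have AB_neq : #|A :&: B| != 2 * q.
  apply: contra neqAB => /eqP cardAB2.
  have eqA : A :&: B = A by apply/eqP; rewrite eqEcard subsetIl cardA cardAB2 /=.
  have eqB : A :&: B = B by apply/eqP; rewrite eqEcard subsetIr cardB cardAB2 /=.
  by rewrite -eqA -[X in _ == X]eqB.
rewrite cardAB in AB_gt0 AB_le AB_neq *.
have c1 : c = 1 by move/eqP: AB_neq => AB_neq; nia.
by rewrite c1 mul1n.
Qed.

Lemma card_sets_containing (T : finType) (x : T) k :
  #|[set A : {set T} | (x \in A) && (#|A| == k.+1)]| = 'C(#|T|.-1, k).
Proof.
pose D := [set S : {set T} | S \subset [set~ x] & #|S| == k].
have x_notin S : S \in D -> x \notin S.
  by rewrite inE => /andP[/subsetP sub _]; apply/negP => /sub; rewrite !inE eqxx.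
rewrite -(cardsC1 x) -cards_draws -/D -(@card_in_imset _ _ (fun S => x |: S) D).
  apply: eq_card => A; rewrite inE; apply/andP/imsetP.
    case=> xA /eqP cardA; exists (A :\ x); last by rewrite setD1K.
    rewrite inE; have := cardsD1 x A; rewrite xA cardA add1n => -[->].
    by rewrite setDE subsetIr eqxx.
  case=> S DS ->; rewrite setU11 cardsU1 (x_notin S DS).
  by move: DS; rewrite inE => /andP[_ /eqP ->].
by move=> S1 S2 D1 D2 eqS; rewrite -(setU1K (x_notin _ D1)) -(setU1K (x_notin _ D2)) eqS.
Qed.

Lemma expn_le_of_lg_bound (n k b t q : nat) :
  0 < n -> 0 < k -> 0 < b -> k = 2 * q ->
  (INR t <= INR k / (2 * INR b) * lg (INR n / INR k) - (INR k + 1) / INR b)%R ->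
  2 ^ (t * b + k + 1) * k ^ q <= n ^ q.
Proof.
move=> /ltP/lt_0_INR n_pos /ltP/lt_0_INR k_pos /ltP/lt_0_INR b_pos k2q bound.
have ln2_pos : (0 < ln 2)%R by rewrite -ln_1; apply: ln_increasing; lra.
have ratio_pos : (0 < INR n / INR k)%R by apply: Rdiv_lt_0_compat.
have kE : INR k = (2 * INR q)%R by rewrite k2q mult_INR.
have exponent_le : (INR (t * b + k + 1) * ln 2 <= INR q * ln (INR n / INR k))%R.
  rewrite !plus_INR mult_INR /=.
  have -> : (INR q * ln (INR n / INR k) =
      ((INR k / (2 * INR b) * lg (INR n / INR k) - (INR k + 1) / INR b) * INR b
       + (INR k + 1)) * ln 2)%R.
    by rewrite /lg kE; field; lra.
  by apply: Rmult_le_compat_r; nra.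
have two_pow_le : (2 ^ (t * b + k + 1) <= (INR n / INR k) ^ q)%R.
  apply: Rnot_lt_le => lt_pow.
  have := ln_increasing _ _ (pow_lt _ q ratio_pos) lt_pow.
  by rewrite !ln_pow //; lra.
apply/leP/INR_le; rewrite mult_INR -!Nat_powE !pow_INR /=.
have -> : (INR n ^ q = (INR n / INR k) ^ q * INR k ^ q)%R.
  by rewrite -Rpow_mult_distr; f_equal; field; lra.
by apply: Rmult_le_compat_r two_pow_le; apply: pow_le; lra.
Qed.

Theorem lemma2 (n k b t : nat) (Q : 'I_t -> {set 'I_n * 'I_b}) :
  (0 < n)%N -> (0 < k)%N -> (0 < b)%N -> (0 < t)%N -> (k <= n)%N ->
  ~~ odd k -> prime_power k./2 ->
  (INR t <= INR k / (2 * INR b) * lg (INR n / INR k) - (INR k + 1) / INR b)%R ->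
  exists A B : {set 'I_n},
    #|A| = k /\ #|B| = k /\ #|A :&: B| = k./2 /\
    forall (i : 'I_t) (beta : 'I_b),
      odd #|A :&: Qslice (Q i) beta| = odd #|B :&: Qslice (Q i) beta|.
Proof.
move=> n_gt0 k_gt0 b_gt0 _ _ k_even q_pp lg_bound; set q := k./2 in q_pp *.
have k2q : k = 2 * q by rewrite -[LHS]odd_double_half (negbTE k_even) mul2n.
have q_gt0 : 0 < q by rewrite lt0n; apply: contraTneq k_gt0 => q0; rewrite k2q q0.
have exp_bound := expn_le_of_lg_bound n_gt0 k_gt0 b_gt0 k2q lg_bound.
rewrite k2q in exp_bound.
pose x : 'I_n := Ordinal n_gt0.
pose F := [set A : {set 'I_n} | (x \in A) && (#|A| == (2 * q - 1).+1)].
pose parity (A : {set 'I_n}) : {ffun 'I_t * 'I_b -> bool} :=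
  [ffun ib => odd #|A :&: Qslice (Q ib.1) ib.2|].
have cardF : #|F| = 'C(n.-1, 2 * q - 1) by rewrite card_sets_containing card_ord.
have k_predS : (2 * q - 1).+1 = k by rewrite k2q; lia.
have F_mult A : A \in F -> q %| #|A|.
  by rewrite inE k_predS k2q => /andP[_ /eqP ->]; apply: dvdn_mull.
have F_big : #|{ffun 'I_t * 'I_b -> bool}| * \sum_(i < q) 'C(#|'I_n|, i) < #|F|.
  rewrite card_ffun card_bool card_prod !card_ord cardF.
  exact: sum_bin_lt_bin q_gt0 exp_bound.
have [A [B [AF BF neqAB eq_parity dvdAB]]] :=
  frankl_wilson_pigeonhole parity q_pp F_mult F_big.
move: AF BF; rewrite !inE k_predS => /andP[xA /eqP cardA] /andP[xB /eqP cardB].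
exists A, B; do 3!split => //.
  apply: card_setI_eq_half dvdAB; rewrite -?k2q //.
  by apply/set0Pn; exists x; rewrite inE xA xB.
move=> i beta; have := congr1 (fun f : {ffun _ -> bool} => f (i, beta)) eq_parity.
by rewrite !ffunE.
Qed.
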